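(* Let $n\ge 3$. The set $\mathbf{W}^{\ge 6}_{\mathrm{bf}}(n)$ is the unique maximal transition semigroup of a minimal DFA $\mathcal{D}_n$ of a bifix-free language (with the state conventions below) in which there are no colliding pairs of states.
   Context: A language is bifix-free if no word of it is a proper prefix or a proper suffix of another word of it. For a minimal complete DFA $\mathcal{D}_n$ of a bifix-free language with $n$ states the states are named $Q=\{0,\dots,n-1\}$ so that $0$ is initial, $n-1$ is the empty state and $n-2$ is the unique final state (quotient $\{\varepsilon\}$). Transformations act on the right, $q(st)=(qs)t$; the transition semigroup $T(n)$ is the semigroup of transformations of $Q$ induced by nonempty words. Let $Q_M=\{1,\dots,n-3\}$. An unordered pair $\{p,q\}$ of distinct states of $Q_M$ is colliding (in $T(n)$) if there is $t\in T(n)$ with $0t=p$ and $rt=q$ for some $r\in Q_M$. Let $\mathbf{B}_{\mathrm{bf}}(n)$ be the set of all transformations $t$ of $Q$ with $0\notin Qt$, $(n-1)t=n-1$, $(n-2)t=n-1$, and for all $j\ge1$, either $0t^j=n-1$ or $0t^j\ne qt^j$ for all $0<q<n-1$. Then $\mathbf{W}^{\ge 6}_{\mathrm{bf}}(n)=\{t\in\mathbf{B}_{\mathrm{bf}}(n)\mid 0t\in\{n-2,n-1\}$, or $0t\in Q_M$ and $qt\in\{n-2,n-1\}$ for all $q\in Q_M\}$. *)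

From mathcomp Require Import all_boot.
Set Implicit Arguments. Unset Strict Implicit. Unset Printing Implicit Defensive.

(* States of D_n are Q = 'I_n = {0,...,n-1}; 0 initial, n-1 empty state,
   n-2 unique final state.  A transformation of Q is a {ffun 'I_n -> 'I_n};
   transformations act on the right: q(st) = (qs)t. *)

Section Defs.
Variable n : nat.
Notation tr := {ffun 'I_n -> 'I_n}.

(* value of state number k (as a nat) under t; identity outside 0..n-1 *)
Definition img (t : tr) (k : nat) : nat :=
  if insub k is Some q then val (t q) else k.

Definition inQM (k : nat) : bool := (0 < k) && (k <= n - 3).

Definition inB (t : tr) : Prop :=
  [/\ forall q : 'I_n, val (t q) != 0,
      img t n.-1 = n.-1,
      img t (n - 2) = n.-1 &
      forall j, 0 < j ->
        iter j (img t) 0 = n.-1 \/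
        forall q : 'I_n, 0 < q < n.-1 -> iter j (img t) 0 <> iter j (img t) q].

Definition inW (t : tr) : Prop :=
  inB t /\
  ((img t 0 = n - 2 \/ img t 0 = n.-1) \/
   (inQM (img t 0) /\
    forall q : 'I_n, inQM q -> img t q = n - 2 \/ img t q = n.-1)).

Section DFA.
Variable A : finType.
Variable d : A -> tr.

Definition run (w : seq A) (q : 'I_n) : 'I_n := foldl (fun p a => d a p) q w.
Definition trans (w : seq A) : tr := [ffun q => run w q].

Definition inT (t : tr) : Prop := exists2 w : seq A, w != [::] & t = trans w.

Definition accepts (w : seq A) : Prop := img (trans w) 0 = n - 2.

Definition bifix_free : Prop :=
  (forall u v x, accepts u -> accepts v -> x != [::] -> v <> u ++ x) /\
  (forall u v x, accepts u -> accepts v -> x != [::] -> v <> x ++ u).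

Definition minimal_dfa : Prop :=
  (forall q : 'I_n, exists w, img (trans w) 0 = val q) /\
  (forall p q : 'I_n, p != q ->
     exists w, (val (run w p) == n - 2) != (val (run w q) == n - 2)).

(* state conventions: n-1 is the empty state, n-2 the final state with
   quotient {eps} *)
Definition state_conventions : Prop :=
  (forall (q : 'I_n) w, val q = n.-1 -> val (run w q) != n - 2) /\
  (forall (q : 'I_n) w, val q = n - 2 -> (val (run w q) == n - 2) = (w == [::])).

Definition bifix_free_min_dfa : Prop :=
  [/\ minimal_dfa, bifix_free & state_conventions].

Definition colliding (p q : nat) : Prop :=
  [/\ inQM p, inQM q, p != q &
      exists t, inT t /\ exists r, inQM r /\
        ((img t 0 = p /\ img t r = q) \/ (img t 0 = q /\ img t r = p))].

Definition no_colliding_pairs : Prop := forall p q, ~ colliding p q.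

End DFA.
End Defs.

From mathcomp Require Import all_boot zify.
Set Implicit Arguments. Unset Strict Implicit. Unset Printing Implicit Defensive.

(* Membership in W^{>=6}_bf(n) reduces to one-step conditions on t: no state
   is sent to 0, n-2 and n-1 are sent to n-1, 0t differs from every qt (q <> 0)
   unless 0t = n-1, and if 0t lies in Q_M then every q <> 0 is sent into
   {n-2, n-1}; the iterated condition of B_bf follows, since after two steps
   either 0 or every other state has reached n-1.
   In a minimal DFA of a bifix-free language every nonempty word w satisfies
   these: qw = 0, or 0w = qw <> n-1, would make an accepted word a proper suffix
   of another one, n-2 and n-1 die after one letter, and if 0w and qw both lie
   in Q_M then {0w, qw} is a colliding pair.
   Conversely the conditions are closed under composition, so the DFA whose
   letters are the elements of W^{>=6}_bf(n), each acting as itself, has exactly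
   this transition semigroup; the letters 0 |-> q and q |-> n-2 (all else to
   n-1) make it minimal, and the same conditions make it bifix-free and free of
   colliding pairs. *)

Lemma imgE n (t : {ffun 'I_n -> 'I_n}) (q : 'I_n) : img t q = val (t q).
Proof. by rewrite /img valK. Qed.

Lemma iter_imgE n (t : {ffun 'I_n -> 'I_n}) j (q : 'I_n) :
  iter j (img t) q = val (iter j t q).
Proof. by elim: j => //= j ->; exact: imgE. Qed.

Lemma run_cons n (A : finType) (d : A -> {ffun 'I_n -> 'I_n}) a w q :
  run d (a :: w) q = run d w (d a q).
Proof. by []. Qed.

Lemma run_cat n (A : finType) (d : A -> {ffun 'I_n -> 'I_n}) u v q :
  run d (u ++ v) q = run d v (run d u q).
Proof. by rewrite /run foldl_cat. Qed.

Lemma trans_cons n (A : finType) (d : A -> {ffun 'I_n -> 'I_n}) a w :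
  trans d (a :: w) = [ffun q => trans d w (d a q)].
Proof. by apply/ffunP => q; rewrite !ffunE. Qed.

Section States.
Variable m : nat.
Local Notation tr := {ffun 'I_m.+3 -> 'I_m.+3}.

Definition st_init : 'I_m.+3 := ord0.
Definition st_empty : 'I_m.+3 := ord_max.
Definition st_final : 'I_m.+3 := @Ordinal m.+3 m.+1 (leqnSn m.+2).

Definition final_or_empty (x : 'I_m.+3) : bool :=
  (x == st_final) || (x == st_empty).

Lemma st_final_neq_empty : (st_final == st_empty) = false.
Proof. by apply/negbTE; rewrite -val_eqE /=; lia. Qed.

Lemma st_empty_neq_final : (st_empty == st_final) = false.
Proof. by rewrite eq_sym st_final_neq_empty. Qed.

Lemma val_st_final : val st_final = m.+3 - 2.
Proof. by rewrite !subSS subn0. Qed.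

Lemma val_eq_final (x : 'I_m.+3) : (val x = m.+3 - 2) <-> x = st_final.
Proof. by rewrite -val_st_final; split => [/val_inj|->]. Qed.

Lemma val_eq_finalE (x : 'I_m.+3) : (val x == m.+3 - 2) = (x == st_final).
Proof. by rewrite -val_st_final val_eqE. Qed.

Lemma val_eq_empty (x : 'I_m.+3) : (val x = m.+2) <-> x = st_empty.
Proof. by split => [h|->] //; apply: val_inj. Qed.

Lemma inQM_ord (x : 'I_m.+3) :
  inQM m.+3 x = (x != st_init) && ~~ final_or_empty x.
Proof.
rewrite /inQM /final_or_empty -!val_eqE /=.
by have := ltn_ord x => ?; apply/idP/idP; lia.
Qed.

Lemma img_init (t : tr) : img t 0 = val (t st_init).
Proof. exact: (imgE t st_init). Qed.

Lemma img_empty (t : tr) : img t m.+2 = val (t st_empty).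
Proof. exact: (imgE t st_empty). Qed.

Lemma img_final (t : tr) : img t (m.+3 - 2) = val (t st_final).
Proof. by rewrite -val_st_final imgE. Qed.

Lemma iter_img_init (t : tr) j : iter j (img t) 0 = val (iter j t st_init).
Proof. exact: (iter_imgE t j st_init). Qed.

Lemma ord_neq_init (q : 'I_m.+3) : (q != st_init) = (0 < q).
Proof. by rewrite -val_eqE lt0n. Qed.

Lemma ord_inner (q : 'I_m.+3) : q != st_init -> q != st_empty -> 0 < q < m.+2.
Proof. by rewrite ord_neq_init -val_eqE /=; have := ltn_ord q; lia. Qed.

(* W^{>=6}_bf(m + 3) with the iterated condition of B_bf cut down to its case
   j = 1, which implies all the others (see [inWbP]). *)
Definition inWb (t : tr) : bool :=
  [&& [forall q, t q != st_init],
      t st_empty == st_empty, t st_final == st_empty,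
      (t st_init == st_empty) || [forall q, (q != st_init) ==> (t q != t st_init)]
    & final_or_empty (t st_init)
      || [forall q, (q != st_init) ==> final_or_empty (t q)]].

Lemma iter_final_or_empty (t : tr) j x :
  t st_empty = st_empty -> t st_final = st_empty ->
  final_or_empty x -> iter j.+1 t x = st_empty.
Proof.
move=> tE tF x_fe; elim: j => [|j IH]; first by case/orP: x_fe => /eqP ->.
by rewrite iterS IH.
Qed.

Lemma inWb_inW (t : tr) : inWb t -> inW t.
Proof.
case/and5P=> /forallP t_init /eqP tE /eqP tF t_sep t_fe.
have sink j x := @iter_final_or_empty t j x tE tF.
split; last first.
  rewrite img_init; case: (boolP (final_or_empty (t st_init))).
    by case/orP=> /eqP ->; [left; left; rewrite val_st_final | left; right].
  move=> t0_fe; move: t_fe; rewrite (negbTE t0_fe) => /forallP t_fe.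
  right; split => [|q]; first by rewrite inQM_ord t_init.
  rewrite inQM_ord imgE => /andP[q0 _].
  by case/orP: (implyP (t_fe q) q0) => /eqP ->; [left; rewrite val_st_final | right].
split.
- by move=> q; rewrite -[0]/(val st_init) val_eqE.
- by rewrite img_empty tE.
- by rewrite img_final tF.
move=> [|[|j]] // _; rewrite iter_img_init.
- rewrite /=; case/orP: t_sep => [/eqP -> | /forallP t_sep]; first by left.
  right => q /andP[q0 _]; rewrite imgE => /val_inj; apply/eqP.
  by rewrite eq_sym; apply: (implyP (t_sep q)); rewrite ord_neq_init.
- case: (boolP (final_or_empty (t st_init))) => [t0_fe|t0_fe].
    by left; rewrite iterSr sink.
  move: t_fe; rewrite (negbTE t0_fe) => /forallP t_fe.
  case: (eqVneq (iter j.+2 t st_init) st_empty) => [-> | t0_ne]; first by left.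
  right => q /andP[q0 _]; rewrite iter_imgE [iter _ t q]iterSr (sink _ (t q)).
    by move/val_inj/eqP; rewrite (negbTE t0_ne).
  by apply: (implyP (t_fe q)); rewrite ord_neq_init.
Qed.

Lemma inW_inWb (t : tr) : inW t -> inWb t.
Proof.
case=> -[t_init tE tF t_iter] t_fe.
move: tE tF; rewrite img_empty img_final => /val_eq_empty tE /val_eq_empty tF.
apply/and5P; split.
- by apply/forallP => q; rewrite -val_eqE; exact: t_init.
- exact/eqP.
- exact/eqP.
- case: (eqVneq (t st_init) st_empty) => //= t0E.
  apply/forallP => q; apply/implyP => q0.
  case: (eqVneq q st_empty) => [->|qE]; first by rewrite tE eq_sym.
  have [|sep] := t_iter 1 erefl.
    by rewrite iter_img_init /= => /val_eq_empty t0E'; rewrite t0E' eqxx in t0E.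
  apply/eqP => /(congr1 val) /esym E; apply: (sep q (ord_inner q0 qE)).
  by rewrite /= img_init imgE.
- move: t_fe; rewrite img_init.
  case=> [[/val_eq_final -> | /val_eq_empty ->] | [_ t_fe]].
  + by rewrite /final_or_empty eqxx.
  + by rewrite /final_or_empty eqxx orbT.
  apply/orP; right; apply/forallP => q; apply/implyP => q0.
  case: (boolP (final_or_empty q)) => [|q_fe].
    by case/orP=> /eqP ->; rewrite /final_or_empty ?tE ?tF eqxx orbT.
  have := t_fe q; rewrite inQM_ord q0 q_fe imgE => /(_ erefl).
  by case=> [/val_eq_final | /val_eq_empty] ->; rewrite /final_or_empty eqxx ?orbT.
Qed.

Lemma inWbP (t : tr) : reflect (inW t) (inWb t).
Proof. exact: (iffP idP (@inWb_inW t) (@inW_inWb t)). Qed.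

End States.

Arguments st_init {m}.
Arguments st_empty {m}.
Arguments st_final {m}.

Lemma accepts_run m (A : finType) (d : A -> {ffun 'I_m.+3 -> 'I_m.+3}) u :
  accepts d u <-> run d u st_init = st_final.
Proof. by rewrite /accepts img_init ffunE val_eq_final. Qed.

Section UpperBound.
Variables (m : nat) (A : finType) (d : A -> {ffun 'I_m.+3 -> 'I_m.+3}).
Hypothesis dfa : bifix_free_min_dfa d.

Lemma reachable q : exists u, run d u st_init = q.
Proof.
have [[reach _] _ _] := dfa; have [u uq] := reach q.
by exists u; apply: val_inj; rewrite -uq img_init ffunE.
Qed.

Lemma reaches_final p : p != st_empty -> exists u, run d u p = st_final.
Proof.
have [[_ dist] _ [empty_dead _]] := dfa.
move=> p_ne; have [u sep] := dist _ _ p_ne; exists u.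
by move: sep; rewrite (negbTE (empty_dead st_empty u erefl)) eqbF_neg negbK => /eqP /val_eq_final.
Qed.

Lemma run_empty u : run d u st_empty = st_empty.
Proof.
have [_ _ [empty_dead _]] := dfa.
apply/eqP; apply: contraT => ne; have [v vF] := reaches_final ne.
by have := empty_dead st_empty (u ++ v) erefl; rewrite run_cat vF val_st_final eqxx.
Qed.

Lemma run_final w : w != [::] -> run d w st_final = st_empty.
Proof.
have [_ _ [_ final_eps]] := dfa.
move=> w_ne; apply/eqP; apply: contraT => ne; have [v vF] := reaches_final ne.
have := final_eps st_final (w ++ v) (val_st_final m).
by rewrite run_cat vF val_st_final eqxx; case: (w) w_ne.
Qed.

Lemma not_accepts_suffix x y : x != [::] ->
  run d y (run d x st_init) = st_final -> run d y st_init != st_final.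
Proof.
have [_ [_ suff] _] := dfa.
move=> x_ne xy_acc; apply/eqP => y_acc.
by apply: (suff y (x ++ y) x) => //; apply/accepts_run; rewrite ?run_cat.
Qed.

Lemma run_neq_init w q : w != [::] -> run d w q != st_init.
Proof.
move=> w_ne; apply/eqP => wq.
have [u uq] := reachable q; have [v vF] := reachable st_final.
have uw_ne : u ++ w != [::] by case: u uq.
have := @not_accepts_suffix (u ++ w) v uw_ne.
by rewrite run_cat uq wq vF eqxx => /(_ erefl).
Qed.

Lemma run_init_separated w q : q != st_init -> run d w st_init != st_empty ->
  run d w st_init != run d w q.
Proof.
move=> q_ne p_ne; apply/eqP => wpq.
have [u uq] := reachable q; have [v vF] := reaches_final p_ne.
have u_ne : u != [::] by case: u uq => [/= uq|//]; rewrite -uq eqxx in q_ne.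
have := @not_accepts_suffix u (w ++ v) u_ne.
by rewrite !run_cat uq -wpq vF eqxx => /(_ erefl).
Qed.

Hypothesis no_collision : no_colliding_pairs d.

Lemma trans_inWb w : w != [::] -> inWb (trans d w).
Proof.
move=> w_ne; apply/and5P; split.
- by apply/forallP => q; rewrite ffunE run_neq_init.
- by rewrite ffunE run_empty.
- by rewrite ffunE run_final.
- rewrite ffunE; case: eqP => //= /eqP p_ne.
  apply/forallP => q; apply/implyP => q_ne.
  by rewrite !ffunE eq_sym run_init_separated.
rewrite ffunE; case: (boolP (final_or_empty _)) => //= p_fe.
apply/forallP => q; apply/implyP => q_ne; rewrite ffunE; apply/negPn/negP => r_fe.
have p_ne : run d w st_init != st_empty.
  by apply: contraNneq p_fe => ->; rewrite /final_or_empty eqxx orbT.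
have q_QM : inQM m.+3 q.
  rewrite inQM_ord q_ne; apply: contra r_fe => /orP[] /eqP ->.
    by rewrite run_final // /final_or_empty eqxx orbT.
  by rewrite run_empty /final_or_empty eqxx orbT.
apply: (@no_collision (val (run d w st_init)) (val (run d w q))); split.
- by rewrite inQM_ord run_neq_init.
- by rewrite inQM_ord run_neq_init.
- by rewrite val_eqE run_init_separated.
exists (trans d w); split; first by exists w.
by exists q; split => //; left; rewrite img_init imgE !ffunE.
Qed.

End UpperBound.

Section LowerBound.
Variable m : nat.
Local Notation tr := {ffun 'I_m.+3 -> 'I_m.+3}.

Lemma inWb_comp (s t : tr) : inWb s -> inWb t -> inWb [ffun q => t (s q)].
Proof.
case/and5P=> _ /eqP sE /eqP sF _ s_fe.
case/and5P=> /forallP t_init /eqP tE /eqP tF _ _.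
have t_fe x : final_or_empty x -> t x = st_empty by case/orP=> /eqP ->.
apply/and5P; split.
- by apply/forallP => q; rewrite ffunE.
- by rewrite ffunE sE tE.
- by rewrite ffunE sF tE.
- rewrite ffunE; case/orP: s_fe => [/t_fe -> | /forallP s_fe]; first by rewrite eqxx.
  case: eqP => //= t0_ne; apply/forallP => q; apply/implyP => q0.
  by rewrite !ffunE t_fe ?(implyP (s_fe q)) // eq_sym; apply/eqP.
rewrite ffunE; case/orP: s_fe => [/t_fe -> | /forallP s_fe].
  by rewrite /final_or_empty eqxx orbT.
apply/orP; right; apply/forallP => q; apply/implyP => q0.
by rewrite ffunE t_fe ?(implyP (s_fe q)) // /final_or_empty eqxx orbT.
Qed.

Lemma inWb_trans_of_letters (A : finType) (d : A -> tr) w :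
  (forall a, inWb (d a)) -> w != [::] -> inWb (trans d w).
Proof.
move=> d_W; elim: w => // a [|b w] IH _.
  by rewrite (_ : trans d [:: a] = d a) //; apply/ffunP => q; rewrite ffunE.
by rewrite trans_cons; apply: inWb_comp; last exact: IH.
Qed.

Lemma inWb_no_collision (t : tr) r : inWb t ->
  inQM m.+3 (img t 0) -> inQM m.+3 r -> ~~ inQM m.+3 (img t r).
Proof.
case/and5P=> _ _ _ _ t_fe; rewrite img_init inQM_ord => /andP[_ p_fe] r_QM.
move: t_fe; rewrite (negbTE p_fe) => /forallP t_fe.
have r_lt : r < m.+3 by move: r_QM => /andP[_]; lia.
move: r_QM; rewrite -[r]/(val (Ordinal r_lt)) imgE !inQM_ord => /andP[r0 _].
by rewrite (implyP (t_fe _) r0) andbF.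
Qed.

Definition Wletter := {t : tr | inWb t}.
Definition Wdelta (a : Wletter) : tr := val a.
Definition letter (t : tr) (t_W : inWb t) : Wletter := exist _ t t_W.

Lemma Wdelta_inWb a : inWb (Wdelta a).
Proof. exact: valP. Qed.

Lemma trans_Wdelta_inWb w : w != [::] -> inWb (trans Wdelta w).
Proof. exact: inWb_trans_of_letters Wdelta_inWb. Qed.

Lemma run_letter (t : tr) (t_W : inWb t) q : run Wdelta [:: letter t_W] q = t q.
Proof. by []. Qed.

Lemma run_Wdelta_empty w : run Wdelta w st_empty = st_empty.
Proof.
elim: w => // a w IH; case/and5P: (Wdelta_inWb a) => _ /eqP aE _ _ _.
by rewrite run_cons aE.
Qed.

Lemma run_Wdelta_final w : w != [::] -> run Wdelta w st_final = st_empty.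
Proof.
case: w => // a w _; case/and5P: (Wdelta_inWb a) => _ _ /eqP aF _ _.
by rewrite run_cons aF run_Wdelta_empty.
Qed.

Definition point_map (a b : 'I_m.+3) : tr :=
  [ffun x => if x == a then b else st_empty].

Lemma point_map_init_inWb q : q != st_init -> inWb (point_map st_init q).
Proof.
move=> q_ne; rewrite /point_map; apply/and5P; split.
- by apply/forallP => x; rewrite ffunE; case: ifP.
- by rewrite ffunE.
- by rewrite ffunE.
- rewrite ffunE eqxx; case: eqP => //= q_nE.
  apply/forallP => x; apply/implyP => x0; rewrite ffunE (negbTE x0).
  by rewrite eq_sym; apply/eqP.
apply/orP; right; apply/forallP => x; apply/implyP => x0.
by rewrite ffunE (negbTE x0) /final_or_empty eqxx orbT.
Qed.

Lemma point_map_final_inWb x : ~~ final_or_empty x -> inWb (point_map x st_final).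
Proof.
rewrite /final_or_empty negb_or => /andP[xF xE]; rewrite /point_map.
apply/and5P; split.
- by apply/forallP => y; rewrite ffunE; case: ifP.
- by rewrite ffunE [_ == x]eq_sym (negbTE xE).
- by rewrite ffunE [_ == x]eq_sym (negbTE xF).
- rewrite ffunE; case: (eqVneq st_init x) => [<-|_] /=; last by rewrite eqxx.
  apply/orP; right; apply/forallP => y; apply/implyP => y0.
  by rewrite ffunE (negbTE y0) st_empty_neq_final.
apply/orP; right; apply/forallP => y; apply/implyP => _.
by rewrite ffunE /final_or_empty; case: ifP; rewrite eqxx ?orbT.
Qed.

Lemma Wdelta_minimal : minimal_dfa Wdelta.
Proof.
split=> [q | p q pq].
  case: (eqVneq q st_init) => [->|q0]; first by exists [::]; rewrite img_init ffunE.
  by exists [:: letter (point_map_init_inWb q0)]; rewrite img_init ffunE run_letter ffunE eqxx.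
suff [w sep] : exists w,
    (run Wdelta w p == st_final) != (run Wdelta w q == st_final).
  by exists w; rewrite !val_eq_finalE.
have sep_by x y : x != y -> ~~ final_or_empty x -> exists w,
    (run Wdelta w x == st_final) != (run Wdelta w y == st_final).
  move=> xy x_fe; exists [:: letter (point_map_final_inWb x_fe)].
  by rewrite !run_letter !ffunE eqxx [y == x]eq_sym (negbTE xy) eqxx st_empty_neq_final.
case: (boolP (final_or_empty p)) => [p_fe | p_fe]; last exact: sep_by.
case: (boolP (final_or_empty q)) => [q_fe | q_fe].
  exists [::] => /=.
  by case/orP: p_fe pq => /eqP ->; case/orP: q_fe => /eqP ->;
    rewrite ?eqxx ?st_empty_neq_final ?st_final_neq_empty.
by have [|w sep] := sep_by q p _ q_fe; [rewrite eq_sym | exists w; rewrite eq_sym].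
Qed.

Lemma Wdelta_bifix_free : bifix_free Wdelta.
Proof.
split=> u v x /accepts_run u_acc /accepts_run + x_ne v_eq; rewrite v_eq run_cat.
  by rewrite u_acc run_Wdelta_final // => /eqP; rewrite st_empty_neq_final.
have u_ne : u != [::] by case: u u_acc v_eq => // /(congr1 val).
case/and5P: (trans_Wdelta_inWb u_ne) => _ _ _ u_sep _.
case/and5P: (trans_Wdelta_inWb x_ne) => /forallP x_init _ _ _ _.
have x0 := x_init st_init; rewrite ffunE in x0.
move: u_sep; rewrite ffunE u_acc st_final_neq_empty /=.
by move=> /forallP /(_ (run Wdelta x st_init)); rewrite x0 ffunE => /= /eqP.
Qed.

Lemma Wdelta_state_conventions : state_conventions Wdelta.
Proof.
split=> [q w /val_eq_empty -> | q [|a w] /val_eq_final ->].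
- by rewrite run_Wdelta_empty val_eq_finalE st_empty_neq_final.
- by rewrite val_eq_finalE eqxx.
- by rewrite run_Wdelta_final // val_eq_finalE st_empty_neq_final.
Qed.

Lemma Wdelta_no_colliding : no_colliding_pairs Wdelta.
Proof.
move=> p q [p_QM q_QM _ [_ [[w w_ne ->] [r [r_QM coll]]]]].
have w_W := trans_Wdelta_inWb w_ne.
move: p_QM q_QM; case: coll => -[<- <-] => [QM0 QMr | QMr QM0];
  exact: (negP (inWb_no_collision w_W QM0 r_QM) QMr).
Qed.

Lemma Wdelta_inT t : inT Wdelta t <-> inW t.
Proof.
split=> [[w w_ne ->] | /inWbP t_W]; first exact/inWbP/trans_Wdelta_inWb.
by exists [:: letter t_W] => //; apply/ffunP => q; rewrite ffunE.
Qed.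

End LowerBound.

Theorem mainTheorem6 (n : nat) (hn : 3 <= n) :
  (exists (A : finType) (d : A -> {ffun 'I_n -> 'I_n}),
      [/\ bifix_free_min_dfa d, no_colliding_pairs d &
          forall t, inT d t <-> inW t]) /\
  (forall (A : finType) (d : A -> {ffun 'I_n -> 'I_n}),
      bifix_free_min_dfa d -> no_colliding_pairs d ->
      forall t, inT d t -> inW t).
Proof.
case: n hn => [|[|[|m]]] // _; split.
  exists (Wletter m), (@Wdelta m); split.
  - by split; [exact: Wdelta_minimal | exact: Wdelta_bifix_free | exact: Wdelta_state_conventions].
  - exact: Wdelta_no_colliding.
  - exact: Wdelta_inT.
move=> A d dfa no_collision t [w w_ne ->].
exact/inWbP/(trans_inWb dfa no_collision).
Qed.
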